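(* Let $K$ be a field, $\kappa$ an infinite cardinal, and $\mathcal R=(R_\alpha\mid\alpha<\kappa)$ a sequence of $K$-algebras each of which possesses a multiplicative basis. Then $R=R(\kappa,K,\mathcal R)$ has a multiplicative basis. If moreover $R_0$ has a strong multiplicative basis containing a non-zero idempotent, then $R$ has a strong multiplicative basis.
   Context: $R(\kappa,K,\mathcal R)$ denotes the $K$-subalgebra $I\oplus1_P\cdot K$ of $P=\prod_{\alpha<\kappa}R_\alpha$, where $I=\bigoplus_{\alpha<\kappa}R_\alpha$. A $K$-linear basis $B$ of a $K$-algebra is multiplicative if for all $b,b'\in B$ either $bb'=0$ or $bb'\in B$, and strong multiplicative if $bb'\in B$ for all $b,b'\in B$. *)

From Stdlib Require List.
From HB Require Import structures.
From mathcomp Require Import all_boot all_algebra.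
Set Implicit Arguments.
Unset Strict Implicit.
Unset Printing Implicit Defensive.
Import GRing.Theory.
Local Open Scope ring_scope.

(* Associative unital K-algebras (the zero algebra is allowed, hence we do
   not use MathComp's algType, which requires 1 != 0). *)
Record kalgebra (K : fieldType) := KAlgebra {
  ka_sort :> lmodType K;
  ka_mul : ka_sort -> ka_sort -> ka_sort;
  ka_one : ka_sort;
  ka_mulA : forall x y z, ka_mul x (ka_mul y z) = ka_mul (ka_mul x y) z;
  ka_mul1l : forall x, ka_mul ka_one x = x;
  ka_mul1r : forall x, ka_mul x ka_one = x;
  ka_mulDl : forall x y z, ka_mul (x + y) z = ka_mul x z + ka_mul y z;
  ka_mulDr : forall x y z, ka_mul x (y + z) = ka_mul x y + ka_mul x z;
  ka_scalerAl : forall (a : K) x y, a *: ka_mul x y = ka_mul (a *: x) y;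
  ka_scalerAr : forall (a : K) x y, a *: ka_mul x y = ka_mul x (a *: y)
}.

Section Bases.
Variables (K : fieldType) (V : Type).
Variables (zero : V) (add : V -> V -> V) (scale : K -> V -> V)
          (mul : V -> V -> V).

Definition lincomb (l : seq (K * V)) : V :=
  foldr (fun p acc => add (scale p.1 p.2) acc) zero l.

Definition is_basis_of (S B : V -> Prop) : Prop :=
  [/\ (forall b, B b -> S b),
      (forall l : seq (K * V), List.NoDup (map snd l) ->
         (forall p, List.In p l -> B p.2) ->
         lincomb l = zero -> forall p, List.In p l -> p.1 = 0)
    & (forall x, S x -> exists l : seq (K * V),
         (forall p, List.In p l -> B p.2) /\ x = lincomb l)].

Definition is_multiplicative_basis_of (S B : V -> Prop) : Prop :=
  is_basis_of S B /\
  forall b b', B b -> B b' -> mul b b' = zero \/ B (mul b b').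

Definition is_strong_multiplicative_basis_of (S B : V -> Prop) : Prop :=
  is_basis_of S B /\ forall b b', B b -> B b' -> B (mul b b').
End Bases.

Definition has_mult_basis (K : fieldType) (A : kalgebra K) : Prop :=
  exists B : A -> Prop,
    is_multiplicative_basis_of 0 +%R *:%R (@ka_mul K A) (fun _ => True) B.

Definition has_strong_mult_basis (K : fieldType) (A : kalgebra K) : Prop :=
  exists B : A -> Prop,
    is_strong_multiplicative_basis_of 0 +%R *:%R (@ka_mul K A) (fun _ => True) B.

Section Product.
Variables (K : fieldType) (I : Type) (A : I -> kalgebra K).
Definition Pt := forall i, A i.
Definition P0 : Pt := fun i => 0.
Definition P1 : Pt := fun i => ka_one (A i).
Definition Padd (x y : Pt) : Pt := fun i => x i + y i.
Definition Pscale (a : K) (x : Pt) : Pt := fun i => a *: x i.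
Definition Pmul (x y : Pt) : Pt := fun i => ka_mul (x i) (y i).

(* membership in I = (+)_i R_i : finite support *)
Definition in_dsum (x : Pt) : Prop :=
  exists s : seq I, forall i, ~ List.In i s -> x i = 0.

(* membership in R(kappa,K,R) = I (+) K.1_P *)
Definition in_Rk (x : Pt) : Prop :=
  exists (y : Pt) (c : K), in_dsum y /\ x = Padd y (Pscale c P1).

Definition Rk_has_mult_basis : Prop :=
  exists B : Pt -> Prop, is_multiplicative_basis_of P0 Padd Pscale Pmul in_Rk B.

Definition Rk_has_strong_mult_basis : Prop :=
  exists B : Pt -> Prop,
    is_strong_multiplicative_basis_of P0 Padd Pscale Pmul in_Rk B.
End Product.

Definition infinite_type (I : Type) : Prop :=
  forall s : seq I, exists i, ~ List.In i s.

From HB Require Import structures.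
From mathcomp Require Import all_boot all_algebra.
From mathcomp Require Import boolp.
From Stdlib Require Import ClassicalEpsilon.
Set Implicit Arguments.
Unset Strict Implicit.
Unset Printing Implicit Defensive.
Import GRing.Theory.
Local Open Scope ring_scope.

(* The direct sum of the R_a has the basis of all e_a(b), with b in the chosen
   multiplicative basis B_a of R_a and e_a the a-th coordinate embedding; and R
   is this direct sum plus the line K 1_P.  Adjoining 1_P (when it is not
   already in the direct sum) gives a basis of R, multiplicative because
   e_a(b) e_c(b') is e_a(b b') or 0 and 1_P is the identity.
   For a strong basis the zero products have to disappear.  Let e be the
   non-zero idempotent in the strong basis B_0 of R_0 and shear every e_a(b),
   a <> 0, into e_0(e) + e_a(b); this is still a basis, and the product of two
   sheared elements is e_0(e) + e_a(b) e_c(b'), which is again a basis element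
   even when e_a(b) e_c(b') = 0.  Linear independence is checked throughout
   with coordinate functionals. *)

Lemma InP (T : eqType) (x : T) (s : seq T) : reflect (List.In x s) (x \in s).
Proof.
elim: s => [|y s IH] /=; first by right.
rewrite inE; apply: (iffP predU1P) => -[->|]; auto; by move/IH; auto.
Qed.

Lemma NoDupP (T : eqType) (s : seq T) : reflect (List.NoDup s) (uniq s).
Proof.
elim: s => [|x s IH] /=; first by left; constructor.
apply: (iffP andP) => [[/InP xs /IH]|dup]; first by constructor.
by inversion dup; split; [apply/InP | apply/IH].
Qed.

Lemma uniq_map_inj_in (T1 T2 : eqType) (f : T1 -> T2) (s : seq T1) :
  uniq (map f s) -> {in s &, injective f}.
Proof.
elim: s => //= x s IH /andP[fxs Us] y z; rewrite !inE.
move=> /predU1P[->|ys] /predU1P[->|zs] //; last exact: IH.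
- by move=> fxz; case/negP: fxs; rewrite fxz map_f.
- by move=> fyx; case/negP: fxs; rewrite -fyx map_f.
Qed.

Section LinearCombinations.
Variables (K : fieldType) (V : lmodType K).
Implicit Types (S B : V -> Prop) (l : seq (K * V)).
Local Notation lc l := (\sum_(p <- l) p.1 *: p.2).

Definition in_span B x := exists2 l, {in l, forall p, B p.2} & x = lc l.

Definition independent B := forall l, uniq (map snd l) ->
  {in l, forall p, B p.2} -> lc l = 0 -> {in l, forall p, p.1 = 0}.

Definition is_basis S B :=
  [/\ forall b, B b -> S b, independent B & forall x, S x -> in_span B x].

Definition subspace S :=
  [/\ S 0, forall x y, S x -> S y -> S (x + y) & forall k x, S x -> S (k *: x)].

Definition linear_on S (phi : V -> K) :=
  (forall x y, S x -> S y -> phi (x + y) = phi x + phi y) /\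
  (forall k x, S x -> phi (k *: x) = k * phi x).

Lemma lincombE l : lincomb 0 +%R *:%R l = lc l.
Proof. by elim: l => [|p l IH] /=; rewrite ?big_nil ?big_cons ?IH. Qed.

Lemma is_basis_ofE S B : is_basis_of 0 +%R *:%R S B <-> is_basis S B.
Proof.
have allE l : (forall p, List.In p l -> B p.2) <-> {in l, forall p, B p.2}.
  by split=> lB p /InP; apply: lB.
split=> [[BS indB spanS]|[BS indB spanS]]; split=> //.
- move=> l /NoDupP Ul /allE lB l0 p /InP; apply: indB => //.
  by rewrite lincombE.
- by move=> x /spanS [l [lB ->]]; exists l; [apply/allE | rewrite lincombE].
- move=> l /NoDupP Ul /allE lB l0 p /InP; apply: indB => //.
  by rewrite -lincombE.
- by move=> x /spanS [l lB ->]; exists l; split; [apply/allE | rewrite lincombE].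
Qed.

Lemma in_span_gen B b : B b -> in_span B b.
Proof.
by exists [:: (1, b)]; [move=> p; rewrite inE => /eqP-> | rewrite big_seq1 scale1r].
Qed.

Lemma scaler_lincomb k l : k *: lc l = lc [seq (k * p.1, p.2) | p <- l].
Proof. by rewrite big_map scaler_sumr; apply: eq_bigr => p _; rewrite scalerA. Qed.

Lemma in_span_subspace B : subspace (in_span B).
Proof.
split; first by exists [::]; rewrite ?big_nil.
- move=> _ _ [l1 l1B ->] [l2 l2B ->]; exists (l1 ++ l2); last by rewrite big_cat.
  by move=> p; rewrite mem_cat => /orP[/l1B|/l2B].
- move=> k _ [l lB ->]; rewrite scaler_lincomb; eexists; last reflexivity.
  by move=> q /mapP[p /lB pB ->].
Qed.

Lemma in_span_min S B : subspace S -> (forall b, B b -> S b) ->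
  forall x, in_span B x -> S x.
Proof.
move=> [S0 SD SZ] BS _ [l lB ->]; elim: l lB => [|p l IH] lB.
  by rewrite big_nil.
rewrite big_cons; apply: SD; last by apply: IH => q ql; apply: lB; rewrite inE ql orbT.
by apply/SZ/BS/lB; rewrite inE eqxx.
Qed.

Lemma in_span_sub B B' : (forall b, B b -> in_span B' b) ->
  forall x, in_span B x -> in_span B' x.
Proof. exact: in_span_min (in_span_subspace B'). Qed.

Lemma linear_on_sub S S' phi : (forall x, S' x -> S x) ->
  linear_on S phi -> linear_on S' phi.
Proof. by move=> S'S [phiD phiZ]; split=> *; [apply: phiD | apply: phiZ]; apply: S'S. Qed.

Lemma linear_on0 S phi : S 0 -> linear_on S phi -> phi 0 = 0.
Proof. by move=> S0 [_ phiZ]; rewrite -(scale0r 0) phiZ ?mul0r. Qed.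

Lemma linear_on_lincomb B phi l : linear_on (in_span B) phi ->
  {in l, forall p, B p.2} -> phi (lc l) = \sum_(p <- l) p.1 * phi p.2.
Proof.
move=> phiL; have [span0 spanD spanZ] := in_span_subspace B.
have phi0 := linear_on0 span0 phiL; have [phiD phiZ] := phiL.
elim: l => [|p l IH] lB; first by rewrite !big_nil.
have lB' : {in l, forall q, B q.2} by move=> q ql; apply: lB; rewrite inE ql orbT.
have pspan : in_span B p.2 by apply/in_span_gen/lB; rewrite inE eqxx.
have lspan : in_span B (lc l) by exists l.
by rewrite !big_cons phiD ?phiZ ?IH //; apply: spanZ.
Qed.

Lemma lincomb_eq0_coef B phi l p : linear_on (in_span B) phi ->
  uniq (map snd l) -> {in l, forall q, B q.2} -> lc l = 0 ->
  p \in l -> phi p.2 = 1 -> {in l, forall q, q.2 != p.2 -> q.1 * phi q.2 = 0} ->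
  p.1 = 0.
Proof.
move=> phiL Ul lB l0 pl phip phiq.
have [span0 _ _] := in_span_subspace B.
have := linear_on_lincomb phiL lB.
rewrite l0 (linear_on0 span0 phiL) (bigD1_seq p) ?(map_uniq Ul) //= phip mulr1.
rewrite big1_seq ?addr0 //.
move=> q /andP[qp ql]; apply: phiq => //; apply: contra qp => /eqP qpE.
by apply/eqP; exact: (uniq_map_inj_in Ul ql pl qpE).
Qed.

Lemma independent_neq0 B b : independent B -> B b -> b != 0.
Proof.
move=> indB Bb; apply/eqP=> b0; suff : (1 : K) = 0 by move/eqP; rewrite oner_eq0.
apply: (indB [:: (1, b)] _ _ _ (1, b)); rewrite ?mem_head //.
- by move=> p; rewrite inE => /eqP->.
- by rewrite big_seq1 scale1r.
Qed.

Definition coef (b : V) l : K := \sum_(p <- l | p.2 == b) p.1.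

Lemma independent_coef0 B l b : independent B ->
  {in l, forall p, B p.2} -> lc l = 0 -> coef b l = 0.
Proof.
move=> indB lB l0; set s := undup (map snd l).
(* [l'] merges the entries of [l] that carry the same vector. *)
pose l' := [seq (coef d l, d) | d <- s].
have snd_l' : map snd l' = s by rewrite -map_comp map_id_in.
have l'E : lc l' = lc l.
  rewrite big_map /= (eq_bigr (fun d => \sum_(p <- l | p.2 == d) p.1 *: p.2)).
    rewrite (exchange_big_dep predT) //=; apply: eq_big_seq => p pl.
    rewrite (eq_bigl (pred1 p.2)) => [|d]; last by rewrite /= eq_sym.
    by rewrite -big_filter filter_pred1_uniq ?undup_uniq ?mem_undup ?map_f ?big_seq1.
  by move=> d _; rewrite scaler_suml; apply: eq_bigr => p /eqP pd; rewrite pd.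
have [bs|bNs] := boolP (b \in s).
  apply: (indB l' _ _ _ (coef b l, b)); rewrite ?snd_l' ?undup_uniq ?l'E ?map_f //.
  by move=> q /mapP[d]; rewrite mem_undup => /mapP[p /lB pB ->] ->.
apply: big1_seq => p /andP[/eqP pb pl]; case/negP: bNs.
by rewrite mem_undup -pb map_f.
Qed.

Lemma independent_coord B b : independent B -> B b -> exists phi,
  [/\ linear_on (in_span B) phi, phi b = 1 & forall b', B b' -> b' != b -> phi b' = 0].
Proof.
move=> indB Bb.
have coefE l1 l2 : {in l1, forall p, B p.2} -> {in l2, forall p, B p.2} ->
    lc l1 = lc l2 -> coef b l1 = coef b l2.
  move=> l1B l2B l12; apply/eqP; rewrite -subr_eq0.
  set l := l1 ++ [seq (- p.1, p.2) | p <- l2].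
  have lB : {in l, forall p, B p.2}.
    by move=> p; rewrite mem_cat => /orP[/l1B | /mapP[q /l2B qB ->]].
  have l0 : lc l = 0.
    rewrite big_cat big_map /= (eq_bigr _ (fun p _ => scaleNr p.1 p.2)).
    by rewrite sumrN l12 subrr.
  by have := independent_coef0 b indB lB l0; rewrite /coef big_cat big_map sumrN => /eqP.
pose rep_of x l := {in l, forall p, B p.2} /\ x = lc l.
pose phi x := coef b (epsilon (inhabits [::]) (rep_of x)).
have phiE l : {in l, forall p, B p.2} -> phi (lc l) = coef b l.
  move=> lB; have [rB rE] := epsilon_spec (inhabits [::]) (rep_of (lc l))
    (ex_intro _ l (conj lB erefl)).
  exact: coefE rB lB (esym rE).
have phi_single b' : B b' -> phi b' = (b' == b)%:R.
  move=> Bb'; have := phiE [:: (1, b')]; rewrite big_seq1 scale1r => ->.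
    by rewrite /coef big_mkcond big_seq1 /=; case: eqP.
  by move=> p; rewrite inE => /eqP->.
exists phi; split.
- split.
  + move=> _ _ [l1 l1B ->] [l2 l2B ->]; rewrite -big_cat !phiE // /coef ?big_cat //.
    by move=> p; rewrite mem_cat => /orP[/l1B | /l2B].
  + move=> k _ [l lB ->]; rewrite scaler_lincomb !phiE // /coef ?big_map ?mulr_sumr //.
    by move=> q /mapP[p /lB pB ->].
- by rewrite phi_single ?eqxx.
- by move=> b' Bb' nb; rewrite phi_single // (negbTE nb).
Qed.

Definition add_line S v x := exists y (c : K), S y /\ x = y + c *: v.

Definition extend_basis S B v x := B x \/ (~ S v /\ x = v).

Lemma basis_add_line S B v : subspace S -> is_basis S B ->
  is_basis (add_line S v) (extend_basis S B v).
Proof.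
move=> Ssub [BS indB spanS]; have [S0 SD SZ] := Ssub.
have spanB_S := in_span_min Ssub BS.
have spanB_ext : forall x, in_span B x -> in_span (extend_basis S B v) x.
  by apply: in_span_sub => b Bb; apply: in_span_gen; left.
split.
- move=> x [Bx | [_ ->]]; [exists x, 0 | exists 0, 1].
    by rewrite scale0r addr0; split=> //; apply: BS.
  by rewrite scale1r add0r.
- have [Sv | NSv] := pselect (S v).
    by move=> l Ul lB; apply: indB => // p /lB[] // [/(_ Sv)].
  move=> l Ul lB l0; have Ul' := map_uniq Ul.
  have [/hasP[q ql /eqP qv] | /hasPn Nv] := boolP (has (fun q => q.2 == v) l); last first.
    apply: indB => // p pl; case: (lB p pl) => // -[_ pv].
    by case/negP: (Nv p pl); apply/eqP.
  have rB : {in rem q l, forall p, B p.2}.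
    move=> p; rewrite mem_rem_uniq // inE => /andP[pq pl].
    case: (lB p pl) => // -[_ pv]; case/negP: pq; apply/eqP.
    by apply: (uniq_map_inj_in Ul pl ql); rewrite pv qv.
  have lE : lc l = q.1 *: v + lc (rem q l).
    by rewrite (perm_big _ (perm_to_rem ql)) big_cons qv.
  have vE : q.1 *: v = -1 *: lc (rem q l) by apply/eqP; rewrite scaleN1r -addr_eq0 -lE l0.
  have q0 : q.1 = 0.
    apply/eqP/negPn/negP => q1; apply: NSv; rewrite -(scalerK q1 v) vE.
    by apply/SZ/SZ/spanB_S; exists (rem q l).
  have r0 : lc (rem q l) = 0 by move: l0; rewrite lE q0 scale0r add0r.
  move=> p pl; have [-> // | pq] := eqVneq p q.
  apply: (indB (rem q l)) => //; last by rewrite mem_rem_uniq // inE pq.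
  exact: subseq_uniq (map_subseq snd (rem_subseq q l)) Ul.
- have [_ spanD spanZ] := in_span_subspace (extend_basis S B v).
  move=> _ [y [c [Sy ->]]]; have [Sv | NSv] := pselect (S v).
    by apply/spanB_ext/spanS/SD/SZ.
  by apply: spanD; [apply/spanB_ext/spanS | apply/spanZ/in_span_gen; right].
Qed.

Lemma extend_mul_closed (mul : V -> V -> V) (P : V -> Prop) S B v :
  (forall x, mul v x = x) -> (forall x, mul x v = x) ->
  (forall x, extend_basis S B v x -> P x) ->
  (forall b b', B b -> B b' -> P (mul b b')) ->
  forall x y, extend_basis S B v x -> extend_basis S B v y -> P (mul x y).
Proof.
move=> mul1l mul1r extP BP x y [Bx | [NSv ->]] [By | [_ ->]];
  rewrite ?mul1l ?mul1r; by [apply: BP | apply: extP; left | apply: extP; right].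
Qed.

Definition shear B C u x := (B x /\ ~ C x) \/ exists2 c, C c & x = u + c.

Lemma basis_shear S B C u : subspace S -> is_basis S B ->
  (forall c, C c -> B c) -> B u -> ~ C u -> is_basis S (shear B C u).
Proof.
move=> [S0 SD SZ] [BS indB spanS] CB Bu NCu.
have Bspan b : B b -> in_span B b := @in_span_gen B b.
have shear_span : forall x, in_span (shear B C u) x -> in_span B x.
  have [_ spanD _] := in_span_subspace B.
  by apply: in_span_sub => x [[Bx _] | [c Cc ->]]; auto.
have uNc c : C c -> u != c by move=> Cc; apply: contraPneq NCu => ->.
split.
- by move=> x [[Bx _] | [c Cc ->]]; auto.
- move=> l Ul lB l0.
  (* The coordinate at c in C sees only u + c among the new vectors; once
     these coefficients vanish, the coordinate at b in B \ C sees only b. *)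
  have glued0 q c : q \in l -> C c -> q.2 = u + c -> q.1 = 0.
    move=> ql Cc qE; have [phi [phiL phic phic']] := independent_coord indB (CB c Cc).
    have phi_glued c' : C c' -> phi (u + c') = (c' == c)%:R.
      move=> Cc'; have [uspan c'span] := (Bspan u Bu, Bspan c' (CB c' Cc')).
      rewrite phiL.1 // phic' ?uNc // add0r mulrb.
      have [->|c'c] := eqVneq c' c; first by rewrite phic.
      by rewrite phic' //; apply: CB.
    apply: (lincomb_eq0_coef (linear_on_sub shear_span phiL) Ul lB l0 ql).
      by rewrite qE phi_glued ?eqxx.
    move=> q' q'l; rewrite qE; case: (lB q' q'l) => [[Bb NCb] | [c' Cc' ->]] ne.
      by rewrite phic' ?mulr0 //; apply: contraPneq NCb => ->.
    have c'c : c' != c by apply: contraNneq ne => ->.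
    by rewrite phi_glued // (negbTE c'c) mulr0.
  move=> p pl; case: (lB p pl) => [[Bb NCb] | [c Cc pE]]; last exact: glued0 pl Cc pE.
  have [phi [phiL phib phib']] := independent_coord indB Bb.
  apply: (lincomb_eq0_coef (linear_on_sub shear_span phiL) Ul lB l0 pl phib).
  move=> q ql ne; case: (lB q ql) => [[Bq _] | [c Cc qE]].
    by rewrite phib' ?mulr0.
  by rewrite (glued0 q c ql Cc qE) mul0r.
- have [_ spanD spanZ] := in_span_subspace (shear B C u).
  move=> x /spanS; apply: in_span_sub => b Bb.
  have [Cb | NCb] := pselect (C b); last by apply: in_span_gen; left.
  have -> : b = u + b - u by rewrite addrAC subrr add0r.
  rewrite -scaleN1r; apply: spanD; first by apply: in_span_gen; right; exists b.
  by apply/spanZ/in_span_gen; left.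
Qed.
End LinearCombinations.

Section KAlgebraTheory.
Variables (K : fieldType) (R : kalgebra K).

Lemma ka_mul0l (x : R) : ka_mul 0 x = 0.
Proof. by apply: (addrI (ka_mul 0 x)); rewrite -ka_mulDl !addr0. Qed.

Lemma ka_mul0r (x : R) : ka_mul x 0 = 0.
Proof. by apply: (addrI (ka_mul x 0)); rewrite -ka_mulDr !addr0. Qed.
End KAlgebraTheory.

Section Product.
Variables (K : fieldType) (I : Type) (A : I -> kalgebra K).

HB.instance Definition _ := Choice.copy (Pt A) (forall i, A i).

Definition Popp (x : Pt A) : Pt A := fun i => - x i.

Lemma Pext (x y : Pt A) : (forall i, x i = y i) -> x = y.
Proof. exact: functional_extensionality_dep. Qed.

Lemma PaddA : associative (@Padd K I A).
Proof. by move=> x y z; apply: Pext => i; apply: addrA. Qed.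
Lemma PaddC : commutative (@Padd K I A).
Proof. by move=> x y; apply: Pext => i; apply: addrC. Qed.
Lemma Padd0 : left_id (P0 A) (@Padd K I A).
Proof. by move=> x; apply: Pext => i; apply: add0r. Qed.
Lemma PaddN : left_inverse (P0 A) Popp (@Padd K I A).
Proof. by move=> x; apply: Pext => i; apply: addNr. Qed.

HB.instance Definition _ := GRing.isZmodule.Build (Pt A) PaddA PaddC Padd0 PaddN.

Lemma PscaleA a b (x : Pt A) : Pscale a (Pscale b x) = Pscale (a * b) x.
Proof. by apply: Pext => i; apply: scalerA. Qed.
Lemma Pscale1 : left_id 1 (@Pscale K I A).
Proof. by move=> x; apply: Pext => i; apply: scale1r. Qed.
Lemma PscaleDr : right_distributive (@Pscale K I A) +%R.
Proof. by move=> a x y; apply: Pext => i; apply: scalerDr. Qed.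
Lemma PscaleDl (x : Pt A) : {morph (fun a => Pscale a x) : a b / a + b}.
Proof. by move=> a b; apply: Pext => i; apply: scalerDl. Qed.

HB.instance Definition _ :=
  GRing.Zmodule_isLmodule.Build K (Pt A) PscaleA Pscale1 PscaleDr PscaleDl.

Lemma PtDE (x y : Pt A) i : (x + y) i = x i + y i. Proof. by []. Qed.
Lemma PtNE (x : Pt A) i : (- x) i = - x i. Proof. by []. Qed.
Lemma PtZE k (x : Pt A) i : (k *: x) i = k *: x i. Proof. by []. Qed.

(* [dfwith] needs decidable equality on the indices, supplied classically by
   [{classic I}]. *)
Definition single (i : I) (a : A i) : Pt A :=
  @dfwith {classic I} (fun j => A j : Type) (fun j => 0) i a.

Lemma single_at i (a : A i) : single a i = a.
Proof. exact: dfwith_in. Qed.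

Lemma single_out i j (a : A i) : i <> j -> single a j = 0.
Proof. by move=> ij; apply: dfwith_out; apply/eqP. Qed.

Lemma singleD i (a b : A i) : single (a + b) = single a + single b.
Proof.
apply: Pext => j; rewrite PtDE.
by have [<-|ij] := pselect (i = j); rewrite ?single_at ?single_out ?addr0.
Qed.

Lemma singleZ i k (a : A i) : single (k *: a) = k *: single a.
Proof.
apply: Pext => j; rewrite PtZE.
by have [<-|ij] := pselect (i = j); rewrite ?single_at ?single_out ?scaler0.
Qed.

Lemma single0 i : single (0 : A i) = 0.
Proof. by rewrite -(scale0r 0) singleZ scale0r. Qed.

Lemma Pmul_single i (a b : A i) : Pmul (single a) (single b) = single (ka_mul a b).
Proof.
apply: Pext => j; rewrite /Pmul.
by have [<-|ij] := pselect (i = j); rewrite ?single_at ?single_out ?ka_mul0l.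
Qed.

Lemma Pmul_single_neq i j (a : A i) (b : A j) : i <> j -> Pmul (single a) (single b) = 0.
Proof.
move=> ij; apply: Pext => k; rewrite /Pmul /=.
have [<-|ik] := pselect (i = k); last by rewrite single_out ?ka_mul0l.
by rewrite (single_out b) ?ka_mul0r // => ji; apply: ij.
Qed.

Lemma PmulDl (x y z : Pt A) : Pmul (x + y) z = Pmul x z + Pmul y z.
Proof. by apply: Pext => i; apply: ka_mulDl. Qed.

Lemma PmulDr (x y z : Pt A) : Pmul x (y + z) = Pmul x y + Pmul x z.
Proof. by apply: Pext => i; apply: ka_mulDr. Qed.

Lemma Pmul1l (x : Pt A) : Pmul (P1 A) x = x.
Proof. by apply: Pext => i; apply: ka_mul1l. Qed.

Lemma Pmul1r (x : Pt A) : Pmul x (P1 A) = x.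
Proof. by apply: Pext => i; apply: ka_mul1r. Qed.

Lemma in_dsum_subspace : subspace (@in_dsum _ _ A).
Proof.
split; first by exists [::].
- move=> x y [s xs] [t yt]; exists (s ++ t) => i ni.
  by rewrite PtDE xs ?yt ?addr0 // => ?; apply: ni; apply: List.in_or_app; auto.
- by move=> k x [s xs]; exists s => i ni; rewrite PtZE xs ?scaler0.
Qed.

Lemma in_dsum_single i (a : A i) : in_dsum (single a).
Proof. by exists [:: i] => j nj; apply: single_out => ij; apply: nj; left. Qed.

Lemma in_dsum_min S : subspace S -> (forall i (a : A i), S (single a)) ->
  forall x, in_dsum x -> S x.
Proof.
move=> [S0 SD SZ] Ssingle x [s]; elim: s x => [|i s IH] x xs.
  by have -> : x = 0 by apply: Pext => i; apply: xs.
have -> : x = single (x i) + (x - single (x i)) by rewrite addrC subrK.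
apply: SD => //; apply: IH => j nj; rewrite PtDE PtNE.
have [<-|ij] := pselect (i = j); first by rewrite single_at subrr.
by rewrite single_out // subr0 xs // => -[].
Qed.

Definition single_basis (B : forall i, A i -> Prop) (x : Pt A) :=
  exists i, exists2 b : A i, B i b & x = single b.

Lemma basis_dsum B : (forall i, is_basis (fun _ => True) (B i)) ->
  is_basis (@in_dsum _ _ A) (single_basis B).
Proof.
move=> basisB; have [span0 spanD spanZ] := in_span_subspace (single_basis B).
split.
- by move=> _ [i [b _ ->]]; apply: in_dsum_single.
- move=> l Ul lB l0 p pl; have [i [b Bb pE]] := lB p pl.
  have [_ indB spanB] := basisB i.
  have [phi [phiL phib phib']] := independent_coord indB Bb.
  have phi0 := linear_on0 (spanB 0 Logic.I) phiL; have [phiD phiZ] := phiL.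
  have phiiL : linear_on (in_span (single_basis B)) (fun x => phi (x i)).
    by split=> [x y _ _ | k x _]; [apply: phiD | apply: phiZ]; apply: spanB.
  apply: (lincomb_eq0_coef phiiL Ul lB l0 pl); first by rewrite pE /= single_at.
  move=> q ql; have [j [b' Bb' ->]] := lB q ql; rewrite pE => ne /=.
  have [ij|ij] := pselect (i = j); last by rewrite single_out ?phi0 ?mulr0 // => /esym/ij.
  subst j; rewrite single_at phib' ?mulr0 //.
  by apply: contraNneq ne => ->.
- apply: in_dsum_min; first exact: in_span_subspace.
  move=> i a; have [_ _ spanB] := basisB i.
  suff Ssub : subspace (fun a : A i => in_span (single_basis B) (single a)).
    apply: (in_span_min Ssub _ (spanB a Logic.I)) => b Bb.
    by apply: in_span_gen; exists i, b.
  split; first by rewrite single0.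
    by move=> x y ? ?; rewrite singleD; apply: spanD.
  by move=> k x ?; rewrite singleZ; apply: spanZ.
Qed.

Lemma single_basis_mul B :
  (forall i (b b' : A i), B i b -> B i b' -> ka_mul b b' = 0 \/ B i (ka_mul b b')) ->
  forall x y, single_basis B x -> single_basis B y ->
  Pmul x y = 0 \/ single_basis B (Pmul x y).
Proof.
move=> Bmul _ _ [i [b Bb ->]] [j [b' Bb' ->]].
have [ij|ij] := pselect (i = j); last by left; apply: Pmul_single_neq.
subst j; rewrite Pmul_single; case: (Bmul i b b' Bb Bb') => [->|Bbb].
  by left; apply: single0.
by right; exists i, (ka_mul b b').
Qed.

Section Glued.
Variables (B : forall i, A i -> Prop) (i0 : I) (B0 : A i0 -> Prop) (e : A i0).
Arguments B : clear implicits.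

Definition outer_basis := single_basis (fun j (b : A j) => j <> i0 /\ B j b).

Definition glued_basis :=
  shear (single_basis (@dfwith {classic I} _ B i0 B0)) outer_basis (single e).

Lemma outer_basis_single (c : A i0) : c != 0 -> ~ outer_basis (single c).
Proof.
move=> c0 [j [b [ji0 _] cb]]; case/eqP: c0.
by rewrite -(single_at c) cb single_out // => /esym.
Qed.

Lemma basis_glued : (forall i, is_basis (fun _ => True) (B i)) ->
  is_basis (fun _ => True) B0 -> B0 e -> e != 0 ->
  is_basis (@in_dsum _ _ A) glued_basis.
Proof.
move=> basisB basisB0 B0e e0; apply: basis_shear; first exact: in_dsum_subspace.
- apply: basis_dsum => i; have [<-|i0i] := pselect (i0 = i); first by rewrite dfwith_in.
  by rewrite dfwith_out //; apply/eqP.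
- move=> _ [j [b [ji0 Bb] ->]]; exists j, b => //.
  by rewrite dfwith_out //; apply/eqP => /esym.
- by exists i0, e; rewrite ?dfwith_in.
- exact: outer_basis_single.
Qed.

Lemma glued_basisP x : glued_basis x ->
  (exists2 c, B0 c & x = single c) \/
  (exists j, j <> i0 /\ exists2 b, B j b & x = single e + single b).
Proof.
move=> [[[i [b Bb ->]] NC] | [_ [j [b [ji0 Bb] ->]] ->]]; last first.
  by right; exists j; split=> //; exists b.
have [i0i|i0i] := pselect (i0 = i).
  by subst i; left; exists b; rewrite // dfwith_in in Bb.
case: NC; exists i, b => //; split; first by move=> /esym.
by rewrite dfwith_out in Bb => //; apply/eqP.
Qed.

Lemma glued_single (c : A i0) : B0 c -> c != 0 -> glued_basis (single c).
Proof.
move=> B0c c0; left; split; last exact: outer_basis_single.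
by exists i0, c; rewrite ?dfwith_in.
Qed.

Lemma glued_sum j b : j <> i0 -> B j b -> glued_basis (single e + single b).
Proof. by move=> ji0 Bb; right; exists (single b) => //; exists j, b. Qed.

Lemma glued_basis_mul :
  (forall i (b b' : A i), B i b -> B i b' -> ka_mul b b' = 0 \/ B i (ka_mul b b')) ->
  independent B0 -> (forall c c', B0 c -> B0 c' -> B0 (ka_mul c c')) ->
  B0 e -> ka_mul e e = e ->
  forall x y, glued_basis x -> glued_basis y -> glued_basis (Pmul x y).
Proof.
move=> Bmul indB0 B0mul B0e ee.
have glued_B0 c : B0 c -> glued_basis (single c).
  by move=> B0c; apply: glued_single (independent_neq0 indB0 B0c).
move=> x y /glued_basisP[[c B0c ->] | [j [ji0 [b Bb ->]]]]
  /glued_basisP[[c' B0c' ->] | [j' [j'i0 [b' Bb' ->]]]].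
- by rewrite Pmul_single; apply/glued_B0/B0mul.
- rewrite PmulDr Pmul_single Pmul_single_neq ?addr0; last by move/esym.
  by apply/glued_B0/B0mul.
- by rewrite PmulDl Pmul_single Pmul_single_neq ?addr0; [apply/glued_B0/B0mul|].
rewrite PmulDl !PmulDr !Pmul_single ee (Pmul_single_neq e b') => [|/esym//].
rewrite (Pmul_single_neq b e) // addr0 add0r.
have [jj'|jj'] := pselect (j = j'); last first.
  by rewrite Pmul_single_neq // addr0; apply: glued_B0.
subst j'; rewrite Pmul_single; case: (Bmul j b b' Bb Bb') => [->|Bbb].
  by rewrite single0 addr0; apply: glued_B0.
exact: glued_sum.
Qed.
End Glued.
End Product.

Theorem lemma5p8 (K : fieldType) (I : Type) (i0 : I)
    (A : I -> kalgebra K) :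
  infinite_type I ->
  (forall i, has_mult_basis (A i)) ->
  Rk_has_mult_basis A /\
  ((exists B : A i0 -> Prop,
      is_strong_multiplicative_basis_of 0 +%R *:%R (@ka_mul K (A i0))
        (fun _ => True) B /\
      exists e, B e /\ ka_mul e e = e /\ e <> 0) ->
   Rk_has_strong_mult_basis A).
Proof.
move=> _ hasB.
have [Bs HBs] : exists Bs : forall i, A i -> Prop, forall i,
    is_multiplicative_basis_of 0 +%R *:%R (@ka_mul K (A i)) (fun _ => True) (Bs i).
  by exists (fun i => sval (cid (hasB i))) => i; case: cid.
have basisBs i : is_basis (fun _ => True) (Bs i) by apply/is_basis_ofE; case: (HBs i).
have mulBs i := (HBs i).2.
split.
  exists (extend_basis (@in_dsum _ _ A) (single_basis Bs) (P1 A)); split.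
    apply/(is_basis_ofE (V := Pt A)).
    exact: basis_add_line (in_dsum_subspace A) (basis_dsum basisBs).
  apply: (extend_mul_closed (P := fun z => z = 0 \/ _)); [exact: Pmul1l | exact: Pmul1r | |].
    by right.
  by move=> b b' Bb Bb'; case: (single_basis_mul mulBs Bb Bb') => ?; [left | right; left].
move=> [B0 [[/is_basis_ofE basisB0 B0mul] [e [B0e [ee /eqP e0]]]]].
exists (extend_basis (@in_dsum _ _ A) (glued_basis Bs B0 e) (P1 A)); split.
  apply/(is_basis_ofE (V := Pt A)).
  exact: basis_add_line (in_dsum_subspace A) (basis_glued basisBs basisB0 B0e e0).
apply: extend_mul_closed; [exact: Pmul1l | exact: Pmul1r | by [] |].
by move=> x y gx gy; left; case: basisB0 => _ indB0 _; apply: glued_basis_mul gx gy.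
Qed.
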